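(* Let $\Phi=\{\varphi_n\}_{n=1}^N\subseteq\mathbb{R}^M$ and let $\mathcal{A}\colon\mathbb{R}^M/\{\pm1\}\to\mathbb{R}^N$ be defined by $(\mathcal{A}(x))(n):=|\langle x,\varphi_n\rangle|^2$. For $x\in\mathbb{R}^M$, $\mathcal{A}^{-1}(\mathcal{A}(x))=\{\pm x\}$ if and only if for every $S\subseteq\{1,\ldots,N\}$, $$x\notin\big(\operatorname{span}(\Phi_S)^\perp\setminus\{0\}\big)+\big(\operatorname{span}(\Phi_{S^\mathrm{c}})^\perp\setminus\{0\}\big).$$ Consequently, $\mathcal{A}$ is almost injective if and only if almost every $x\in\mathbb{R}^M$ lies outside this Minkowski sum for all $S\subseteq\{1,\ldots,N\}$.
   Context: For $S\subseteq\{1,\ldots,N\}$, $\Phi_S:=\{\varphi_n\}_{n\in S}$ and $S^\mathrm{c}$ is the complement of $S$ in $\{1,\ldots,N\}$; the span of the empty set is $\{0\}$. The sum $A+B=\{a+b:a\in A,b\in B\}$ is the Minkowski sum. The map $\mathcal{A}$ is called almost injective if $\mathcal{A}^{-1}(\mathcal{A}(x))=\{\pm x\}$ for (Lebesgue) almost every $x\in\mathbb{R}^M$. *)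

From mathcomp Require Import all_boot all_order all_algebra.
From mathcomp Require Import boolp classical_sets reals.
Set Implicit Arguments. Unset Strict Implicit. Unset Printing Implicit Defensive.
Import Order.TTheory GRing.Theory Num.Theory.
Local Open Scope ring_scope.
Local Open Scope classical_set_scope.

Definition dotv (R : realType) (M : nat) (x y : 'rV[R]_M) : R :=
  \sum_(i < M) x ord0 i * y ord0 i.

Definition intensity (R : realType) (M N : nat) (phi : 'I_N -> 'rV[R]_M)
  (x : 'rV[R]_M) : 'I_N -> R := fun n => `|dotv x (phi n)| ^+ 2.

Definition span_of (R : realType) (M N : nat) (phi : 'I_N -> 'rV[R]_M)
  (S : {set 'I_N}) : set 'rV[R]_M :=
  [set v | exists c : 'I_N -> R, v = \sum_(n in S) c n *: phi n].

Definition orth (R : realType) (M : nat) (V : set 'rV[R]_M) : set 'rV[R]_M :=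
  [set y | forall v, V v -> dotv y v = 0].

Definition minkowski (R : realType) (M : nat) (A B : set 'rV[R]_M) : set 'rV[R]_M :=
  [set x | exists a b, A a /\ B b /\ x = a + b].

Definition bad_set (R : realType) (M N : nat) (phi : 'I_N -> 'rV[R]_M)
  (S : {set 'I_N}) : set 'rV[R]_M :=
  minkowski (orth (span_of phi S) `\ 0) (orth (span_of phi (~: S)) `\ 0).

Definition box (R : realType) (M : nat) (a b : 'rV[R]_M) : set 'rV[R]_M :=
  [set x | forall i, a ord0 i <= x ord0 i <= b ord0 i].
Definition box_vol (R : realType) (M : nat) (a b : 'rV[R]_M) : R :=
  \prod_(i < M) (b ord0 i - a ord0 i).

Definition lebesgue_null (R : realType) (M : nat) (E : set 'rV[R]_M) : Prop :=
  forall eps : R, 0 < eps ->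
  exists a b : nat -> 'rV[R]_M,
    (forall k i, a k ord0 i <= b k ord0 i) /\
    E `<=` \bigcup_k box (a k) (b k) /\
    (forall n, \sum_(k < n) box_vol (a k) (b k) <= eps).

Definition ae_Rn (R : realType) (M : nat) (P : 'rV[R]_M -> Prop) : Prop :=
  lebesgue_null [set x | ~ P x].

Definition recovers (R : realType) (M N : nat) (phi : 'I_N -> 'rV[R]_M)
  (x : 'rV[R]_M) : Prop :=
  [set y | intensity phi y = intensity phi x] = [set x; - x].

Definition almost_injective (R : realType) (M N : nat) (phi : 'I_N -> 'rV[R]_M) : Prop :=
  ae_Rn (recovers phi).

(** If [y] has the same intensities as [x], then [<y, phi_n> = ± <x, phi_n>] for
    every [n]; with [S] the set of [n] where the sign is [+], the splitting
    [x = (x - y)/2 + (x + y)/2] puts the first summand in [span(Phi_S)^perp] and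
    the second in [span(Phi_S^c)^perp], and both are nonzero exactly when
    [y <> ± x].  Conversely, a splitting [x = a + b] of that kind yields
    [y = a - b], which has the same intensities as [x] but is not [± x]. *)

From mathcomp Require Import all_boot all_order all_algebra.
From mathcomp Require Import boolp classical_sets reals.
Local Open Scope ring_scope.
Local Open Scope classical_set_scope.
Set Implicit Arguments.
Unset Strict Implicit.
Unset Printing Implicit Defensive.
Import GRing.Theory Num.Theory.

Lemma addrr_eq0 (F : numFieldType) (V : lmodType F) (v : V) :
  (v + v == 0) = (v == 0).
Proof. by rewrite -mulr2n -scaler_nat scaler_eq0 pnatr_eq0. Qed.

Lemma halvesD (F : numFieldType) (V : lmodType F) (x y : V) :
  2%:R^-1 *: (x - y) + 2%:R^-1 *: (x + y) = x.
Proof.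
rewrite -scalerDr addrCA subrK -mulr2n -scaler_nat scalerA mulVf ?scale1r //.
by rewrite pnatr_eq0.
Qed.

Lemma sqr_norm_eq (R : realDomainType) (t s : R) :
  `|t| ^+ 2 = `|s| ^+ 2 -> t = s \/ t = - s.
Proof.
by rewrite !real_normK ?num_real // => /eqP; rewrite eqf_sqr => /orP[] /eqP; tauto.
Qed.

Section InnerProduct.
Variables (R : realType) (M : nat).
Implicit Types x y v : 'rV[R]_M.

Lemma dotvDl x y v : dotv (x + y) v = dotv x v + dotv y v.
Proof. by rewrite /dotv -big_split; apply: eq_bigr => i _; rewrite mxE mulrDl. Qed.

Lemma dotvNl x v : dotv (- x) v = - dotv x v.
Proof. by rewrite /dotv -sumrN; apply: eq_bigr => i _; rewrite mxE mulNr. Qed.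

Lemma dotvBl x y v : dotv (x - y) v = dotv x v - dotv y v.
Proof. by rewrite dotvDl dotvNl. Qed.

Lemma dotvZl (k : R) x v : dotv (k *: x) v = k * dotv x v.
Proof. by rewrite /dotv mulr_sumr; apply: eq_bigr => i _; rewrite mxE mulrA. Qed.

Lemma dotv_sumr (I : finType) (A : {pred I}) (c : I -> R) (w : I -> 'rV[R]_M) x :
  dotv x (\sum_(i in A) c i *: w i) = \sum_(i in A) c i * dotv x (w i).
Proof.
rewrite /dotv; under eq_bigr do rewrite summxE mulr_sumr.
rewrite exchange_big; apply: eq_bigr => i _; rewrite mulr_sumr.
by apply: eq_bigr => j _; rewrite mxE mulrCA.
Qed.

Lemma orth_spanP (N : nat) (phi : 'I_N -> 'rV[R]_M) (S : {set 'I_N}) x :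
  orth (span_of phi S) x <-> {in S, forall n, dotv x (phi n) = 0}.
Proof.
split=> [xS n nS | xS _ [c ->]].
- apply: xS; exists (fun m => (m == n)%:R).
  rewrite (bigD1 n) //= eqxx scale1r big1 ?addr0 // => m /andP[_ /negbTE ->].
  by rewrite scale0r.
- by rewrite dotv_sumr big1 // => n nS; rewrite xS ?mulr0.
Qed.

End InnerProduct.

Section Recovery.
Variables (R : realType) (M N : nat) (phi : 'I_N -> 'rV[R]_M).
Implicit Types x y a b : 'rV[R]_M.

Lemma intensityN x : intensity phi (- x) = intensity phi x.
Proof. by apply: funext => n; rewrite /intensity dotvNl normrN. Qed.

Lemma intensity_eqP x y :
  intensity phi y = intensity phi x ->
  forall n, dotv y (phi n) = dotv x (phi n) \/ dotv y (phi n) = - dotv x (phi n).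
Proof. by move=> Exy n; apply: sqr_norm_eq; rewrite -/(intensity phi y n) Exy. Qed.

Lemma intensity_flip (S : {set 'I_N}) a b :
  orth (span_of phi S) a -> orth (span_of phi (~: S)) b ->
  intensity phi (a - b) = intensity phi (a + b).
Proof.
move=> /orth_spanP aS /orth_spanP bSc; apply: funext => n.
rewrite /intensity dotvBl dotvDl.
have [nS | nSc] := boolP (n \in S); first by rewrite aS // !add0r normrN.
by rewrite bSc ?inE // subr0 addr0.
Qed.

Lemma bad_set_not_recovers (S : {set 'I_N}) x :
  bad_set phi S x -> ~ recovers phi x.
Proof.
move=> [a [b [[aS a_neq0] [[bSc b_neq0] ->]]]] rec.
have : [set a + b; - (a + b)] (a - b) by rewrite -rec /= (intensity_flip aS bSc).
case=> [/addrI/eqP | ].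
- by rewrite eq_sym -subr_eq0 opprK addrr_eq0 => /eqP.
- by rewrite opprD => /addIr/eqP; rewrite -subr_eq0 opprK addrr_eq0 => /eqP.
Qed.

Lemma bad_set_of_intensity_eq x y :
  intensity phi y = intensity phi x -> y != x -> y != - x ->
  bad_set phi [set n | dotv x (phi n) == dotv y (phi n)] x.
Proof.
move=> Exy y_neq_x y_neq_Nx.
have two_neq0 : 2%:R != 0 :> R by rewrite pnatr_eq0.
exists (2%:R^-1 *: (x - y)), (2%:R^-1 *: (x + y)).
split; [split | split; [split | by rewrite halvesD]].
- apply/orth_spanP => n; rewrite inE => /eqP Exyn.
  by rewrite dotvZl dotvBl Exyn subrr mulr0.
- move=> /= /eqP; rewrite scaler_eq0 invr_eq0 (negbTE two_neq0) subr_eq0.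
  by rewrite eq_sym (negbTE y_neq_x).
- apply/orth_spanP => n; rewrite !inE => Nxyn.
  rewrite dotvZl dotvDl; case: (intensity_eqP Exy n) => Eyn.
    by rewrite Eyn eqxx in Nxyn.
  by rewrite Eyn subrr mulr0.
- move=> /= /eqP; rewrite scaler_eq0 invr_eq0 (negbTE two_neq0) addr_eq0.
  by rewrite -eqr_oppLR eq_sym (negbTE y_neq_Nx).
Qed.

Lemma recoversP x : recovers phi x <-> forall S, ~ bad_set phi S x.
Proof.
split=> [rec S /bad_set_not_recovers // | good].
apply/seteqP; split=> [y /= Exy | y [] ->]; rewrite /= ?intensityN //.
have [-> | y_neq_x] := eqVneq y x; first by left.
have [-> | y_neq_Nx] := eqVneq y (- x); first by right.
by case: (good _ (bad_set_of_intensity_eq Exy y_neq_x y_neq_Nx)).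
Qed.

End Recovery.

Theorem lemma9 (R : realType) (M N : nat) (phi : 'I_N -> 'rV[R]_M) :
  (forall x : 'rV[R]_M,
     recovers phi x <-> (forall S : {set 'I_N}, ~ bad_set phi S x)) /\
  (almost_injective phi <->
     ae_Rn (fun x => forall S : {set 'I_N}, ~ bad_set phi S x)).
Proof.
split; first exact: recoversP.
rewrite /almost_injective.
have -> : recovers phi = (fun x => forall S : {set 'I_N}, ~ bad_set phi S x).
  by apply: funext => x; apply: propext; exact: recoversP.
exact: iff_refl.
Qed.
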